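(* For any $t_\infty,\delta,\varepsilon>0$ there exists $\eta>0$ such that for all sufficiently large $T$, \[\mathbb{P}\Big(s_T(t+\eta)\subseteq\bigcup_{y\in s_T(t)}B(y,\delta)\ \ \forall t\le t_\infty\Big)\ge1-\varepsilon.\]
   Context: $(\xi(z))_{z\in\mathbb{Z}^d}$ are i.i.d. with $\mathbb{P}(\xi(z)>x)=x^{-\alpha}$ for $x\ge1$, $\alpha>d$. $|\cdot|$ is the $\ell_1$-norm, $B(z,R)$ the open $\ell_1$-ball. $q=d/(\alpha-d)$, $a(T)=(T/\log T)^q$, $r(T)=(T/\log T)^{q+1}$, $L_T=\{z\in\mathbb{R}^d:r(T)z\in\mathbb{Z}^d\}$, $\xi_T(z)=\xi(r(T)z)/a(T)$, $[z]_T=(\lfloor r(T)z_i\rfloor/r(T))_{i=1}^d$. For $z\in L_T$, \[h_T(z)=\inf\Big\{\sum_{j=1}^n q\frac{|y_{j-1}-y_j|}{\xi_T(y_j)}: n\ge0,\ y_0,\dots,y_n\in L_T,\ y_0=z,\ y_n=0\Big\},\] and $s_T(t)=\{z\in\mathbb{R}^d: h_T([z]_T)\le t\}$. *)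

From HB Require Import structures.
From mathcomp Require Import all_boot all_order all_algebra.
From mathcomp Require Import all_classical all_reals all_analysis.
Set Implicit Arguments. Unset Strict Implicit. Unset Printing Implicit Defensive.
Import Order.TTheory GRing.Theory Num.Theory.
Local Open Scope classical_set_scope.
Local Open Scope ring_scope.

Section Defs.
Variable R : realType.
Variable d : nat.

Definition norm1 (v : 'rV[R]_d) : R := \sum_(i < d) `|v 0 i|.

Definition ball1 (y : 'rV[R]_d) (delta : R) : set 'rV[R]_d :=
  [set x | norm1 (x - y) < delta].

Variable alpha : R.
Definition qexp : R := d%:R / (alpha - d%:R).
Definition aT (T : R) : R := (T / ln T) `^ qexp.
Definition rT (T : R) : R := (T / ln T) `^ (qexp + 1).

Definition LT (T : R) (z : 'rV[R]_d) : Prop :=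
  exists k : 'rV[int]_d, forall i, rT T * z 0 i = (k 0 i)%:~R.

(* the integer point r(T) z (exact for z in L_T) *)
Definition toZ (T : R) (z : 'rV[R]_d) : 'rV[int]_d :=
  \row_i Num.floor (rT T * z 0 i).

Variable Omega : Type.
Variable xi : 'rV[int]_d -> Omega -> R.

Definition xiT (T : R) (w : Omega) (z : 'rV[R]_d) : R :=
  xi (toZ T z) w / aT T.

Definition hT (T : R) (w : Omega) (z : 'rV[R]_d) : R :=
  inf [set s : R | exists (n : nat) (y : nat -> 'rV[R]_d),
        [/\ (forall j, (j <= n)%N -> LT T (y j)), y 0%N = z, y n = 0 &
            s = \sum_(1 <= j < n.+1) qexp * norm1 (y j.-1 - y j) / xiT T w (y j)]].

Definition roundT (T : R) (z : 'rV[R]_d) : 'rV[R]_d :=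
  \row_i ((Num.floor (rT T * z 0 i))%:~R / rT T).

Definition sT (T : R) (w : Omega) (t : R) : set 'rV[R]_d :=
  [set z | hT T w (roundT T z) <= t].

End Defs.

Section Prob.
Local Open Scope ereal_scope.
Definition iid_pareto (R : realType) (d : nat) (alpha : R)
  (dO : measure_display) (Omega : measurableType dO) (P : probability Omega R)
  (xi : 'rV[int]_d -> Omega -> R) : Prop :=
  [/\ (forall z, measurable_fun setT (xi z)),
      (forall z (x : R), (1 <= x)%R ->
          P [set w | (x < xi z w)%R] = (x `^ (- alpha))%:E) &
      (* mutual independence: product rule over every finite subfamily *)
      (forall (s : seq 'rV[int]_d) (B : 'rV[int]_d -> set R), uniq s ->
          (forall z, measurable (B z)) ->
          P (\bigcap_(z in [set` s]) (xi z @^-1` B z)) =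
          \prod_(z <- s) P (xi z @^-1` B z))].
End Prob.

(* On the event that every weight exceeds 1 and that the weights in the
   l1-ball of radius rho are at most M a(T), the rescaled environment xi_T lies in
   (0, M] on that ball; by a union bound over the O(r(T)^d rho^d) sites and the
   identity r(T)^d a(T)^(-alpha) = 1 this event has probability at least
   1 - (3 rho)^d M^(-alpha), which is small for M large.  On it, a near-optimal
   lattice path from [z]_T realising h_T <= t + eta stays in the ball and every step
   of cost c moves at most (M/q) c in l1-distance; cutting the path where the
   remaining cost equals t (interpolating on the crossing edge) gives a point of
   s_T(t) within (M/q) 2 eta + 2 d / r(T) < delta of z. *)

From HB Require Import structures.
From mathcomp Require Import all_boot all_order all_algebra.
From mathcomp Require Import all_classical all_reals all_analysis.
From mathcomp Require Import ring lra zify.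
Import Order.TTheory GRing.Theory Num.Theory.
Local Open Scope classical_set_scope.
Local Open Scope ring_scope.
Set Implicit Arguments. Unset Strict Implicit. Unset Printing Implicit Defensive.

Section Norm1.
Variables (R : realType) (d : nat).
Implicit Types u v x : 'rV[R]_d.

Lemma norm1_ge0 v : 0 <= norm1 v.
Proof. exact: sumr_ge0. Qed.

Lemma norm1_0 : norm1 (0 : 'rV[R]_d) = 0.
Proof. by rewrite /norm1 big1 // => i _; rewrite mxE normr0. Qed.

Lemma norm1D u v : norm1 (u + v) <= norm1 u + norm1 v.
Proof. by rewrite /norm1 -big_split; apply: ler_sum => i _; rewrite mxE ler_normD. Qed.

Lemma norm1_sub_trans u v x : norm1 (u - x) <= norm1 (u - v) + norm1 (v - x).
Proof. by apply: le_trans (norm1D _ _); rewrite addrA subrK. Qed.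

Lemma norm1_coord v i : `|v 0 i| <= norm1 v.
Proof. by rewrite /norm1 (bigD1 i) //= lerDl sumr_ge0. Qed.

End Norm1.

Definition truncz (R : realType) (x : R) : int :=
  if 0 <= x then Num.floor x else - Num.floor (- x).

Lemma truncz_spec (R : realType) (x : R) :
  `|(truncz x)%:~R : R| <= `|x| /\ `|x - (truncz x)%:~R| < 1.
Proof.
rewrite /truncz; case: (leP 0 x) => x0.
  have /andP[lex ltx] := floor_itv x.
  rewrite !ger0_norm ?ler0z ?floor_ge0 ?subr_ge0 //.
  by move: ltx; rewrite intrD; lra.
have /andP[lex ltx] := floor_itv (- x).
rewrite mulrNz normrN ger0_norm ?ler0z ?floor_ge0 ?oppr_ge0 ?(ltW x0) //.
rewrite ltr0_norm // opprK addrC ler0_norm; last by move: lex; lra.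
by move: ltx; rewrite intrD; lra.
Qed.

Section Lattice.
Variables (R : realType) (d : nat) (alpha T : R).
Hypothesis rT_gt0 : 0 < rT d alpha T.
Local Notation r := (rT d alpha T).
Local Notation LT := (@LT R d alpha T).
Implicit Types z : 'rV[R]_d.

Lemma LT_toZ z : LT z -> forall i, z 0 i = (toZ alpha T z 0 i)%:~R / r.
Proof.
by move=> [k Hk] i; rewrite /toZ mxE Hk intrKfloor -Hk mulrAC divff ?mul1r ?gt_eqF.
Qed.

Lemma LT_int_row (W : 'rV[int]_d) : LT (\row_i ((W 0 i)%:~R / r)).
Proof. by exists W => i; rewrite mxE mulrC divfK ?gt_eqF. Qed.

Lemma roundT_LT z : LT (roundT alpha T z).
Proof.
by have := LT_int_row (toZ alpha T z); congr LT; apply/rowP => i; rewrite !mxE.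
Qed.

Lemma roundT_id z : LT z -> roundT alpha T z = z.
Proof. by move=> Lz; apply/rowP => i; rewrite [RHS](LT_toZ Lz) !mxE. Qed.

Lemma norm1_sub_roundT z : norm1 (z - roundT alpha T z) <= d%:R / r.
Proof.
apply: (@le_trans _ _ (\sum_(i < d) r^-1)).
  2: by rewrite sumr_const card_ord -[_ *+ d]mulr_natl.
apply: ler_sum => i _; rewrite !mxE.
have /andP[lex ltx] := floor_itv (r * z 0 i).
have -> : z 0 i - (Num.floor (r * z 0 i))%:~R / r =
          (r * z 0 i - (Num.floor (r * z 0 i))%:~R) / r by field; rewrite lt0r_neq0.
rewrite normrM normfV (gtr0_norm rT_gt0) -{2}[r^-1]mul1r ler_pM2r ?invr_gt0 //.
rewrite ger0_norm ?subr_ge0 //.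
by move: ltx; rewrite intrD; lra.
Qed.

Lemma LT_toZ_le z rho : LT z -> norm1 z <= rho ->
  forall i, `|(toZ alpha T z 0 i)%:~R : R| <= r * rho.
Proof.
move=> Lz zrho i.
have -> : (toZ alpha T z 0 i)%:~R = r * z 0 i by rewrite (LT_toZ Lz) mulrC divfK ?lt0r_neq0.
by rewrite normrM gtr0_norm // ler_pM2l // (le_trans (norm1_coord _ _)).
Qed.

Lemma LT_interpolate p u lam : LT p -> LT u -> 0 <= lam <= 1 ->
  exists2 w, LT w & norm1 (w - u) <= lam * norm1 (p - u) /\
    norm1 (p - w) <= (1 - lam) * norm1 (p - u) + d%:R / r.
Proof.
move=> Lp Lu /andP[lam0 lam1].
have [P pE] : exists P : 'rV[int]_d, forall i, p 0 i = (P 0 i)%:~R / r.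
  by exists (toZ alpha T p); apply: LT_toZ.
have [U uE] : exists U : 'rV[int]_d, forall i, u 0 i = (U 0 i)%:~R / r.
  by exists (toZ alpha T u); apply: LT_toZ.
pose D i : R := (P 0 i)%:~R - (U 0 i)%:~R.
(* [w] rounds [u + lam (p - u)] coordinatewise towards [u]. *)
pose m i := truncz (lam * D i).
pose W : 'rV[int]_d := \row_i (U 0 i + m i).
have normD : norm1 (p - u) = \sum_(i < d) `|D i| / r.
  apply: eq_bigr => i _.
  by rewrite !mxE pE uE -mulrBl normrM normfV (gtr0_norm rT_gt0).
exists (\row_i ((W 0 i)%:~R / r)); first exact: LT_int_row.
split.
- rewrite normD mulr_sumr; apply: ler_sum => i _.
  rewrite !mxE uE intrD mulrDl addrAC subrr add0r normrM normfV (gtr0_norm rT_gt0).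
  rewrite mulrA ler_pM2r ?invr_gt0 // -(ger0_norm lam0) -normrM.
  exact: (truncz_spec _).1.
- apply: (@le_trans _ _ (\sum_(i < d) ((1 - lam) * (`|D i| / r) + r^-1))); last first.
    by rewrite big_split /= sumr_const card_ord -[_ *+ d]mulr_natl normD mulr_sumr.
  apply: ler_sum => i _.
  have -> : (p - \row_i ((W 0 i)%:~R / r)) 0 i = (D i - (m i)%:~R) / r.
    by rewrite !mxE pE intrD /D; field; rewrite lt0r_neq0.
  rewrite normrM normfV (gtr0_norm rT_gt0) mulrA -[X in _ <= _ + X]mul1r -mulrDl.
  rewrite ler_pM2r ?invr_gt0 //.
  have := (truncz_spec (lam * D i)).2; rewrite -/(m i).
  have : `|D i - lam * D i| = (1 - lam) * `|D i|.
    by rewrite -{1}[D i]mul1r -mulrBl normrM ger0_norm ?subr_ge0.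
  have := ler_normD (D i - lam * D i) (lam * D i - (m i)%:~R).
  rewrite addrA subrK; lra.
Qed.

End Lattice.

Section Paths.
Variables (R : realType) (d : nat) (alpha : R) (Omega : Type).
Variables (xi : 'rV[int]_d -> Omega -> R) (T : R) (w : Omega).
Local Notation q := (qexp d alpha).
Local Notation r := (rT d alpha T).
Local Notation xT := (xiT alpha xi T w).
Local Notation LT := (@LT R d alpha T).
Local Notation hT := (hT alpha xi T w).
Hypothesis q_gt0 : 0 < q.
Hypothesis rT_gt0 : 0 < r.
Hypothesis xiT_gt0 : forall z, 0 < xT z.
Implicit Types (y : nat -> 'rV[R]_d) (z v : 'rV[R]_d).

Definition step_cost y j : R := q * norm1 (y j.-1 - y j) / xT (y j).

Definition path_cost y n : R := \sum_(1 <= j < n.+1) step_cost y j.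

Definition lattice_path y n := (forall j, (j <= n)%N -> LT (y j)) /\ y n = 0.

Lemma step_cost_ge0 y j : 0 <= step_cost y j.
Proof.
by apply: divr_ge0; [apply: mulr_ge0; [apply: ltW | apply: norm1_ge0] | apply: ltW].
Qed.

Lemma path_cost_ge0 y n : 0 <= path_cost y n.
Proof. by rewrite /path_cost sumr_ge0 // => j _; apply: step_cost_ge0. Qed.

Lemma path_cost0 y : path_cost y 0 = 0.
Proof. by rewrite /path_cost big_geq. Qed.

Lemma path_costS y n :
  path_cost y n.+1 = step_cost y 1 + path_cost (fun j => y j.+1) n.
Proof.
rewrite /path_cost big_ltn // big_add1 /=; congr (_ + _).
by apply: eq_big_nat => -[].
Qed.

Lemma lattice_pathS y n : lattice_path y n.+1 -> lattice_path (fun j => y j.+1) n.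
Proof. by move=> [Ly yn]; split => // j jn; apply: Ly. Qed.

Lemma hT_le_path_cost y n : lattice_path y n -> hT (y 0%N) <= path_cost y n.
Proof.
move=> [Ly yn]; apply: ge_inf; last by exists n, y.
by exists 0 => _ [m [y' [_ _ _ ->]]]; apply: path_cost_ge0.
Qed.

Lemma hT_le_cons v y n : LT v -> lattice_path y n ->
  hT v <= q * norm1 (v - y 0%N) / xT (y 0%N) + path_cost y n.
Proof.
move=> Lv [Ly yn].
pose y' j := if j is j'.+1 then y j' else v.
have := @hT_le_path_cost y' n.+1; rewrite path_costS; apply.
by split => // -[|j] jn //; apply: Ly.
Qed.

Lemma exists_path_cost_lt z s : LT z -> hT z < s ->
  exists n y, [/\ lattice_path y n, y 0%N = z & path_cost y n < s].
Proof.
move=> Lz; case/inf_lt => [|_ [n [y [Ly y0 yn ->]]] lts]; last by exists n, y.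
pose y1 j : 'rV[R]_d := if j is 0 then z else 0.
exists (path_cost y1 1), 1%N, y1; split => //.
by move=> [|[|j]] _ //; exists 0 => i; rewrite !mxE mulr0.
Qed.


Section BoundedEnvironment.
Variables M rho : R.
Hypothesis M_gt0 : 0 < M.
Hypothesis xiT_le : forall z, LT z -> norm1 z <= rho -> xT z <= M.

Lemma norm1_step_le y j : xT (y j) <= M -> norm1 (y j.-1 - y j) <= M / q * step_cost y j.
Proof.
move=> xM; rewrite /step_cost; set N := norm1 _.
have -> : M / q * (q * N / xT (y j)) = M / xT (y j) * N.
  by field; rewrite !lt0r_neq0.
by rewrite ler_peMl ?norm1_ge0 // ler_pdivlMr // mul1r.
Qed.

Lemma lattice_path_norm1_le n y : lattice_path y n -> M / q * path_cost y n <= rho ->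
  forall j, (j <= n)%N -> norm1 (y j) <= M / q * path_cost y n.
Proof.
have Mq : 0 <= M / q by rewrite divr_ge0 ?ltW.
elim: n y => [|n IH] y Py Hrho.
  by move=> [|] // _; rewrite Py.2 norm1_0 path_cost0 mulr0.
have Py' := lattice_pathS Py.
have rest_le : path_cost (fun j => y j.+1) n <= path_cost y n.+1.
  by rewrite path_costS lerDr step_cost_ge0.
have Hrho' := le_trans (ler_wpM2l Mq rest_le) Hrho.
move=> [_|j jn]; last exact: le_trans (IH _ Py' Hrho' j jn) (ler_wpM2l Mq rest_le).
have y1_le := IH _ Py' Hrho' 0%N isT.
have xy1 : xT (y 1%N) <= M by apply: xiT_le (Py.1 1%N isT) (le_trans y1_le Hrho').
have := norm1_sub_trans (y 0%N) (y 1%N) 0; rewrite !subr0 path_costS mulrDr => le_y0.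
exact: le_trans le_y0 (lerD (norm1_step_le xy1) y1_le).
Qed.

Lemma first_edge_cut n y (t : R) : lattice_path y n.+1 -> xT (y 1%N) <= M ->
  path_cost (fun j => y j.+1) n <= t < path_cost y n.+1 ->
  exists2 v, LT v & hT v <= t /\
    norm1 (y 0%N - v) <= M / q * (path_cost y n.+1 - t) + d%:R / r.
Proof.
move=> Py xy1; rewrite path_costS; set c1 := step_cost y 1; set rest := path_cost _ n.
move=> /andP[rest_t t_cost].
pose lam := (t - rest) / c1.
have c1_gt0 : 0 < c1 by lra.
have lam_c1 : lam * c1 = t - rest by rewrite divfK ?lt0r_neq0.
have lam01 : 0 <= lam <= 1 by rewrite divr_ge0 ?ler_pdivrMr ?mul1r //=; lra.
have [v Lv [v_near v_far]] := LT_interpolate rT_gt0 (Py.1 0%N isT) (Py.1 1%N isT) lam01.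
exists v => //; split.
  apply: le_trans (hT_le_cons Lv (lattice_pathS Py)) _.
  rewrite -/rest -[t](subrK rest) -lam_c1 lerD2r /c1 /step_cost /=.
  by rewrite (mulrA lam) ler_pM2r ?invr_gt0 // mulrCA ler_pM2l.
apply: le_trans v_far _; rewrite lerD2r.
have lam1 : 0 <= 1 - lam by case/andP: lam01; lra.
apply: le_trans (ler_wpM2l lam1 (norm1_step_le xy1)) _.
have Mq : 0 <= M / q by rewrite divr_ge0 ?ltW.
by rewrite mulrCA ler_wpM2l // mulrBl mul1r lam_c1 -/c1; lra.
Qed.

Lemma lattice_path_cut n y (t s : R) : 0 <= t -> 0 <= s -> lattice_path y n ->
  M / q * path_cost y n <= rho -> path_cost y n <= t + s ->
  exists2 v, LT v & hT v <= t /\ norm1 (y 0%N - v) <= M / q * s + d%:R / r.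
Proof.
move=> t0; set k := M / q; have k0 : 0 <= k by rewrite divr_ge0 ?ltW.
have dr0 : 0 <= d%:R / r by rewrite divr_ge0 ?ler0n ?ltW.
move=> s0 Py Hrho Hcost; have [cost_le|] := leP (path_cost y n) t.
  exists (y 0%N); first exact: Py.1.
  split; first exact: le_trans (hT_le_path_cost Py) cost_le.
  by rewrite subrr norm1_0; apply: addr_ge0 => //; apply: mulr_ge0.
elim: n y s s0 Py Hrho Hcost => [|n IH] y s s0 Py Hrho Hcost cost_gt.
  by move: cost_gt; rewrite path_cost0; lra.
have xy1 : xT (y 1%N) <= M.
  apply: xiT_le (Py.1 1%N isT) _.
  exact: le_trans (lattice_path_norm1_le Py Hrho (j := 1%N) isT) Hrho.
have [rest_t|rest_t] := leP (path_cost (fun j => y j.+1) n) t.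
  have [|v Lv [hv y0v]] := first_edge_cut Py xy1 (t := t); first by rewrite rest_t.
  exists v => //; split => //; apply: le_trans y0v _.
  by rewrite lerD2r ler_wpM2l //; lra.
move: Hrho Hcost rest_t; rewrite path_costS.
set c1 := step_cost y 1; set rest := path_cost _ n => Hrho Hcost rest_t.
have rest_le : k * rest <= rho by apply: le_trans Hrho; rewrite ler_wpM2l // lerDr step_cost_ge0.
have [v Lv [hv y1v]] : exists2 v, LT v &
    hT v <= t /\ norm1 (y 1%N - v) <= k * (s - c1) + d%:R / r.
  by apply: (IH _ (s - c1) _ (lattice_pathS Py) rest_le); rewrite -/rest; lra.
exists v => //; split => //.
apply: le_trans (norm1_sub_trans _ (y 1%N) _) _.
by move: (norm1_step_le xy1) y1v; rewrite -/k -/c1 mulrBr; lra.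
Qed.

Lemma sT_subset_bigcup_ball (eta delta t : R) : 0 < eta -> 0 <= t ->
  M / q * (t + 2 * eta) <= rho -> 2 * (d%:R / r) + M / q * (2 * eta) < delta ->
  sT alpha xi T w (t + eta) `<=` \bigcup_(v in sT alpha xi T w t) ball1 v delta.
Proof.
move=> eta0 t0 Hrho Hdelta z; rewrite /sT /= => hz.
have Mq : 0 <= M / q by rewrite divr_ge0 ?ltW.
have [|n [y [Py y0E cost_lt]]] := exists_path_cost_lt (roundT_LT rT_gt0 z) (s := t + 2 * eta).
  by lra.
have eta2 : 0 <= 2 * eta by lra.
have cost_rho : M / q * path_cost y n <= rho.
  by apply: le_trans Hrho; rewrite ler_wpM2l // ltW.
have [v Lv [hv y0v]] := lattice_path_cut t0 eta2 Py cost_rho (ltW cost_lt).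
exists v; first by rewrite /sT /= roundT_id.
rewrite /ball1 /=; apply: le_lt_trans (norm1_sub_trans z (y 0%N) v) _.
by move: (norm1_sub_roundT rT_gt0 z) y0v; rewrite y0E; lra.
Qed.

End BoundedEnvironment.
End Paths.

Section ParetoTails.
Variables (R : realType) (d : nat) (alpha : R).
Variables (dO : measure_display) (Omega : measurableType dO) (P : probability Omega R).
Variable xi : 'rV[int]_d -> Omega -> R.
Hypothesis xi_meas : forall z, measurable_fun setT (xi z).
Hypothesis xi_tail : forall z (x : R), 1 <= x -> P [set w | x < xi z w] = (x `^ (- alpha))%:E.

Lemma measurable_xi_gt z (c : R) : measurable [set w | c < xi z w].
Proof.
have := xi_meas z measurableT (measurable_itv `]c, +oo[); rewrite setTI.
by congr measurable; apply/seteqP; split => w /=; rewrite in_itv /= andbT.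
Qed.

Lemma xi_le1_negligible : P.-negligible [set w | exists z, xi z w <= 1].
Proof.
apply: (@negligibleS _ _ _ _ (\bigcup_n [set w | xi (odflt 0 (unpickle n)) w <= 1])).
  by move=> w [z xz]; exists (pickle z) => //=; rewrite pickleK.
apply: negligible_bigcup => n; set z := odflt 0 (unpickle n).
exists (~` [set w | 1 < xi z w]); split.
- exact/measurableC/measurable_xi_gt.
- by have := probability_setC P (measurable_xi_gt z 1); rewrite xi_tail // powR1 subee.
- by move=> w /= xz; apply/negP; rewrite -leNgt.
Qed.

(* Only the one-site tails enter: a union bound, no independence. *)
Lemma pareto_union_bound (S : seq 'rV[int]_d) (x : R) : 1 <= x ->
  exists A : set Omega, [/\ measurable A,
    ((1 - (size S)%:R * x `^ (- alpha))%:E <= P A)%E,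
    forall w, A w -> forall z, 1 < xi z w &
    forall w, A w -> forall z, z \in S -> xi z w <= x].
Proof.
move=> x1; have [B [mB PB xiB]] := xi_le1_negligible.
pose Exceed i := [set w | x < xi (nth 0 S i) w].
pose Big := \big[setU/set0]_(i < size S) Exceed i.
have mBig : measurable Big by apply: bigsetU_measurable => i _; apply: measurable_xi_gt.
exists (~` (B `|` Big)); split.
- exact/measurableC/measurableU.
- rewrite probability_setC; last exact: measurableU.
  have PBig : (P Big <= \sum_(i < size S) P (Exceed i))%E.
    by apply: Boole_inequality => i _; apply: measurable_xi_gt.
  have sumE : (\sum_(i < size S) P (Exceed i) =
               ((size S)%:R * x `^ (- alpha))%:E)%E.
    by under eq_bigr do rewrite xi_tail //; rewrite sumEFin sumr_const card_ord mulr_natl.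
  rewrite sumE in PBig.
  have PU : (P (B `|` Big) <= P B + P Big)%E by apply: measureU2.
  move: (le_trans PU (leeD2l _ PBig)); rewrite PB add0e.
  case: (P (B `|` Big)) => [p| |] //= => [|_]; last by rewrite addey ?leey.
  by rewrite -EFinD !lee_fin; lra.
- move=> w notB z; rewrite ltNge; apply/negP => xz; apply: notB; left.
  by apply: xiB; exists z.
- move=> w notB z zS; rewrite leNgt; apply/negP => xz; apply: notB; right.
  rewrite /Big -bigcup_mkord; exists (index z S); first by rewrite /= index_mem.
  by rewrite /Exceed /= nth_index.
Qed.

End ParetoTails.

Lemma int_box_seq (d N : nat) : exists2 S : seq 'rV[int]_d,
  size S = ((2 * N).+1 ^ d)%N & forall k : 'rV[int]_d, (forall i, `|k 0 i| <= N%:Z) -> k \in S.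
Proof.
pose shift (f : {ffun 'I_d -> 'I_(2 * N).+1}) : 'rV[int]_d := \row_i ((f i : nat)%:Z - N%:Z).
exists (map shift (enum {ffun 'I_d -> 'I_(2 * N).+1})).
  by rewrite size_map -cardE card_ffun !card_ord.
move=> k kN; pose f : {ffun 'I_d -> 'I_(2 * N).+1} := [ffun i => inord (absz (k 0 i + N%:Z))].
have -> : k = shift f.
  apply/rowP => i; have := kN i; rewrite /shift !mxE ffunE => kiN.
  by rewrite inordK; lia.
by rewrite map_f ?mem_enum.
Qed.

Lemma T_div_lnT_ge (R : realType) (L : R) : 0 <= L ->
  exists T0 : R, forall T, T0 <= T -> L <= T / ln T.
Proof.
move=> L0; exists ((2 * L + 2) ^+ 2) => T T0T.
have T4 : 4 <= T by apply: le_trans T0T; rewrite expr2; nra.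
have T0 : 0 <= T by lra.
set s := Num.sqrt T; have sE : s ^+ 2 = T by rewrite sqr_sqrtr.
have s_ge : 2 * L + 2 <= s.
  have : Num.sqrt ((2 * L + 2) ^+ 2) <= s by rewrite ler_sqrt.
  by rewrite sqrtr_sqr ger0_norm //; lra.
have ln_s : 0 < ln s <= s - 1.
  rewrite ln_gt0 /=; last lra.
  by have := @le_ln1Dx R (s - 1); rewrite addrCA subrr addr0; apply; lra.
have lnT : ln T = 2 * ln s by rewrite -sE lnXn ?mulr_natl //; lra.
rewrite lnT ler_pdivlMr; last lra.
by rewrite -sE expr2; nra.
Qed.

Section Scaling.
Variables (R : realType) (d : nat) (alpha : R).
Hypothesis d_lt_alpha : d%:R < alpha.

Lemma qexp_gt0 : (0 < d)%N -> 0 < qexp d alpha.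
Proof. by move=> d0; rewrite divr_gt0 ?ltr0n // subr_gt0. Qed.

Lemma qexp_ge0 : 0 <= qexp d alpha.
Proof. by rewrite divr_ge0 ?ler0n // subr_ge0 ltW. Qed.

Lemma rT_ge (T : R) : 1 <= T / ln T -> T / ln T <= rT d alpha T.
Proof. by move=> B1; rewrite le1r_powR // lerDr qexp_ge0. Qed.

Lemma aT_ge1 (T : R) : 1 <= T / ln T -> 1 <= aT d alpha T.
Proof. by move=> B1; rewrite -(powRr0 (T / ln T)) ler_powR // qexp_ge0. Qed.

Lemma eventually_rT_ge (L : R) : 0 <= L ->
  exists T0 : R, forall T, T0 <= T -> 1 <= T / ln T /\ L <= rT d alpha T.
Proof.
move=> L0; have [|T0 T0P] := T_div_lnT_ge (L := L + 1); first lra.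
exists T0 => T /T0P BL; have B1 : 1 <= T / ln T by lra.
by split => //; apply: le_trans (rT_ge B1); lra.
Qed.

(* The exponent [q = d / (alpha - d)] is exactly what makes this hold. *)
Lemma rT_aT_pow (T : R) : 0 < T / ln T -> rT d alpha T ^+ d * aT d alpha T `^ (- alpha) = 1.
Proof.
move=> B0; rewrite -powR_mulrn ?powR_ge0 // -!powRrM -powRD ?lt0r_neq0 ?implybT //.
suff -> : (qexp d alpha + 1) * d%:R + qexp d alpha * - alpha = 0 by rewrite powRr0.
rewrite /qexp; field; rewrite subr_eq0; apply/eqP => da.
by move: d_lt_alpha; rewrite da ltxx.
Qed.

Lemma box_tail_le (N : nat) (r a M rho : R) : 0 < M -> 0 < a -> 1 <= r * rho ->
  N%:R <= r * rho -> r ^+ d * a `^ (- alpha) = 1 ->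
  ((2 * N).+1 ^ d)%:R * (M * a) `^ (- alpha) <= (3 * rho) ^+ d * M `^ (- alpha).
Proof.
move=> M0 a0 rrho1 Nrrho ra.
have -> : (3 * rho) ^+ d * M `^ (- alpha) = (3 * (r * rho)) ^+ d * (M * a) `^ (- alpha).
  by rewrite powRM ?ltW // -[LHS]mulr1 -ra !exprMn; ring.
by rewrite ler_wpM2r ?powR_ge0 // natrX lerXn2r ?nnegrE ?ler0n //; lra.
Qed.

Lemma exists_scale_tail_le (K eps : R) : 0 <= K -> 0 < eps ->
  exists2 M, 1 <= M & forall rho, 0 <= rho <= M * K -> (3 * rho) ^+ d * M `^ (- alpha) <= eps.
Proof.
move=> K0 eps0; set p := alpha - d%:R; have p0 : 0 < p by rewrite subr_gt0.
set X := (3 * K) ^+ d; have X0 : 0 <= X by rewrite exprn_ge0 ?mulr_ge0.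
set M := Num.max 1 ((X / eps) `^ p^-1).
have M1 : 1 <= M by rewrite le_max lexx.
have M0 : 0 < M by lra.
have XM : X / eps <= M `^ p.
  have -> : X / eps = ((X / eps) `^ p^-1) `^ p.
    by rewrite -powRrM mulVf ?lt0r_neq0 // powRr1 // divr_ge0 // ltW.
  apply: ge0_ler_powR; rewrite ?nnegrE ?powR_ge0 ?le_max ?lexx ?orbT //; [exact: ltW | lra].
have MpM : M ^+ d * M `^ (- alpha) = (M `^ p)^-1.
  rewrite -powR_mulrn ?ltW // -powRD ?lt0r_neq0 ?implybT //.
  by rewrite -powRN opprB /p addrC.
exists M => // rho /andP[rho0 rhoMK].
apply: (@le_trans _ _ (X * M ^+ d * M `^ (- alpha))).
  by rewrite ler_wpM2r ?powR_ge0 // /X -exprMn lerXn2r ?nnegrE ?mulr_ge0 //; lra.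
by rewrite -mulrA MpM ler_pdivrMr ?powR_gt0 // mulrC -ler_pdivrMr.
Qed.

End Scaling.

Lemma good_environment (R : realType) (d : nat) (alpha : R)
    (dO : measure_display) (Omega : measurableType dO) (P : probability Omega R)
    (xi : 'rV[int]_d -> Omega -> R) (T M rho : R) :
  d%:R < alpha -> (forall z, measurable_fun setT (xi z)) ->
  (forall z (x : R), 1 <= x -> P [set w | x < xi z w] = (x `^ (- alpha))%:E) ->
  1 <= T / ln T -> 1 <= M -> 1 <= rho ->
  exists A : set Omega, [/\ measurable A,
    ((1 - (3 * rho) ^+ d * M `^ (- alpha))%:E <= P A)%E &
    forall w, A w -> (forall z, 0 < xiT alpha xi T w z) /\
      forall z, LT alpha T z -> norm1 z <= rho -> xiT alpha xi T w z <= M].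
Proof.
move=> da xi_meas xi_tail B1 M1 rho1.
have r_ge := rT_ge da B1; have a1 := aT_ge1 da B1.
set r := rT d alpha T in r_ge *; set a := aT d alpha T in a1 *.
have r_gt0 : 0 < r by lra.
have [S Ssize Sbox] := int_box_seq d (Num.trunc (r * rho)).
have [|A [mA PA A_gt1 A_le]] := pareto_union_bound xi_meas xi_tail S (x := M * a).
  by rewrite -[1](mulr1 1) ler_pM.
exists A; split => //.
  apply: le_trans PA; rewrite lee_fin lerD2l lerN2 Ssize.
  have r_rho : 1 <= r * rho by nra.
  by apply: (@box_tail_le R d alpha _ r); rewrite ?truncn_le ?rT_aT_pow //; lra.
move=> w Aw; split => [z|z Lz zrho].
  by rewrite /xiT -/a divr_gt0 ?(lt_trans ltr01 (A_gt1 _ Aw _)) //; lra.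
rewrite /xiT -/a ler_pdivrMr; last lra.
apply: A_le Aw _ (Sbox _ _) => i; have := LT_toZ_le r_gt0 Lz zrho i.
by rewrite -abszE lez_nat truncn_ge_nat ?natr_absz ?intr_norm //; nra.
Qed.

Theorem lemma6p1 (R : realType) (d : nat) (alpha : R)
  (dO : measure_display) (Omega : measurableType dO) (P : probability Omega R)
  (xi : 'rV[int]_d -> Omega -> R) :
  (0 < d)%N -> d%:R < alpha -> iid_pareto alpha P xi ->
  forall tinf delta eps : R, 0 < tinf -> 0 < delta -> 0 < eps ->
  exists eta : R, 0 < eta /\
  exists T0 : R, forall T : R, T0 <= T ->
  exists A : set Omega, [/\ measurable A,
    A `<=` [set w | forall t : R, 0 <= t <= tinf ->
       sT alpha xi T w (t + eta) `<=`
       \bigcup_(y in sT alpha xi T w t) ball1 y delta] &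
    ((1 - eps)%:E <= P A)%E].
Proof.
move=> d0 da [xi_meas xi_tail _] tinf delta eps tinf0 delta0 eps0.
have q0 := qexp_gt0 da d0; set q := qexp d alpha in q0 *.
have K0 : 0 <= tinf / q + delta + 1 by have := divr_ge0 (ltW tinf0) (ltW q0); lra.
have [M M1 tail_le] := exists_scale_tail_le da K0 eps0.
(* [rho] exceeds [(M / q) (tinf + 2 eta)], the l1-reach of paths of that cost. *)
set rho := M / q * tinf + delta + 1.
have Mq0 : 0 <= M / q by apply: divr_ge0; lra.
have eta0 : 0 < delta * q / (8 * M) by apply: divr_gt0; [apply: mulr_gt0 | lra].
exists (delta * q / (8 * M)); split => //.
have Mq_eta : M / q * (2 * (delta * q / (8 * M))) = delta / 4.
  by field; rewrite !lt0r_neq0 //; lra.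
have [|T0 T0P] := eventually_rT_ge da (L := 4 * d%:R / delta).
  by rewrite divr_ge0 ?mulr_ge0 ?ler0n ?ltW.
exists T0 => T /T0P [B1 r_ge].
have [|A [mA PA envA]] := good_environment (rho := rho) da xi_meas xi_tail B1 M1.
  by have := mulr_ge0 Mq0 (ltW tinf0); rewrite /rho; lra.
exists A; split => // [w /envA [xiT_gt0 xiT_le] t /andP[t0 t_le]|]; last first.
  apply: le_trans PA; rewrite lee_fin lerD2l lerN2 tail_le //.
  by rewrite /rho !mulrDr mulrA mulr1 [M * tinf]mulrC; nra.
have r_gt0 : 0 < rT d alpha T by rewrite (lt_le_trans _ r_ge) ?divr_gt0 ?mulr_gt0 ?ltr0n.
have dr : d%:R / rT d alpha T <= delta / 4.
  by move: r_ge; rewrite !ler_pdivrMr //; nra.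
apply: (sT_subset_bigcup_ball q0 r_gt0 xiT_gt0 _ xiT_le); rewrite -/q ?Mq_eta //; try lra.
by rewrite mulrDr Mq_eta /rho; have := ler_wpM2l Mq0 t_le; lra.
Qed.
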